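(* Let $\alpha\in\mathbb{Q}$ and let $$f(x)=c_0+c_1(x-\alpha)^{e_1}+\cdots+c_t(x-\alpha)^{e_t}\in\mathbb{Q}[x]$$ with $c_1,\dots,c_t\neq 0$ and integers $0<e_1<\cdots<e_t$, so that $n=\deg f=e_t$. Let $B_T,B_H,B_N\in\mathbb{N}$ satisfy $t\le B_T$, $\mathrm{size}(c_i)\le B_H$ for $0\le i\le t$, and $\log_2 n\le B_N$, and suppose $\deg f>2B_T$. Then there exist $C_1,C_2\in\mathbb{N}$ with $\log_2 C_1\le 2B_H$ and $\log_2 C_2\le B_N(3B_T-1)$ such that for every prime $p$ with $p\nmid C_1$ and $(p-1)\nmid C_2$, we have $\deg f^{(p)}>2B_T$.
   Context: For $q\in\mathbb{Q}$ written as $q=a/b$ with $a\in\mathbb{Z}$, $b\in\mathbb{N}$, $\gcd(a,b)=1$, $\mathrm{size}(q)=\lceil\log_2(|a|+1)\rceil+\lceil\log_2(b+1)\rceil+1$. For a prime $p$ and $f\in\mathbb{Q}[x]$, $f^{(p)}\in\mathbb{Z}_p[x]$ denotes the unique polynomial of degree less than $p$ which is congruent to $f$ modulo $x^p-x$ and whose coefficients are reduced modulo $p$. *)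

From HB Require Import structures.
From mathcomp Require Import all_boot all_order all_algebra.
Set Implicit Arguments. Unset Strict Implicit. Unset Printing Implicit Defensive.
Import Order.TTheory GRing.Theory Num.Theory.
Local Open Scope ring_scope.

Definition clog2 (m : nat) : nat := up_log 2 m.

(* size(a/b) = ceil(log2(|a|+1)) + ceil(log2(b+1)) + 1, with a/b in lowest
   terms, b > 0 (rat stores numq/denq in lowest terms, denq > 0). *)
Definition qsize (q : rat) : nat :=
  (clog2 (`|numq q|%N).+1 + clog2 (`|denq q|%N).+1 + 1)%N.

Definition p_integral (p : nat) (q : rat) : bool := ~~ (p %| `|denq q|%N)%N.

(* reduction of a rational modulo p (meaningful when q is p-integral) *)
Definition rat_modp (p : nat) (q : rat) : 'F_p :=
  (numq q)%:~R / (denq q)%:~R.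

(* f^(p): coefficients of f reduced mod p, then the remainder modulo x^p - x,
   i.e. the unique polynomial of degree < p congruent to f mod x^p - x. *)
Definition red_p (p : nat) (f : {poly rat}) : {poly 'F_p} :=
  (map_poly (rat_modp p) f) %% ('X^p - 'X).

Definition shifted_sparse (alpha : rat) (t : nat) (c : nat -> rat) (e : nat -> nat)
  : {poly rat} :=
  (c 0%N)%:P + \sum_(1 <= i < t.+1) c i *: ('X - alpha%:P) ^+ (e i).

From HB Require Import structures.
From mathcomp Require Import all_boot all_order all_algebra all_field.
From mathcomp Require Import ring zify.
Import Order.TTheory GRing.Theory Num.Theory.
Local Open Scope ring_scope.

(* Write f = g \Po ('X - alpha) with g = c_0 + sum_i c_i X^(e_i).  If p divides neither
   the numerator and denominator of c_t nor the denominator of c_0, then alpha is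
   p-integral (it is a root of f - c_0, whose leading coefficient c_t is a p-unit),
   hence so is g = f \Po ('X + alpha), i.e. every c_i.  Modulo p and X^p - X we have
   (X - a)^p = X - a, so (X - a)^e reduces to (X - a)^r with r in [1, p-1] and
   r = e mod p-1.  If p-1 divides none of e_t - e_i (i < t) and e_t - k (1 <= k <= 2 B_T),
   the reduced exponent of e_t differs from all the others and exceeds 2 B_T, so the
   reduction of c_t survives as a coefficient and deg f^(p) > 2 B_T.  C_2 is the product of these
   differences and C_1 = |num c_t| den c_t den c_0. *)

Lemma size_XnsubX (R : nzRingType) n : (1 < n)%N -> size ('X^n - 'X : {poly R}) = n.+1.
Proof. by move=> n_gt1; rewrite size_addl ?size_polyXn // size_opp size_polyX ltnS. Qed.

Lemma modp_sum (F : fieldType) (I : Type) (r : seq I) (P : pred I) (G : I -> {poly F}) d :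
  (\sum_(i <- r | P i) G i) %% d = \sum_(i <- r | P i) (G i %% d).
Proof. exact: (big_morph _ (fun p q => modpD d p q) (mod0p d)). Qed.

Lemma leq_exp_clog2 m : (m <= 2 ^ clog2 m.+1)%N.
Proof. exact: leq_trans (leqnSn m) (up_logP _ _). Qed.

Lemma leq_numq_denq_qsize q r : (`|numq q| * `|denq q| * `|denq r| <= 2 ^ (qsize q + qsize r))%N.
Proof.
apply: leq_trans (leq_mul (leq_mul (leq_exp_clog2 _) (leq_exp_clog2 _)) (leq_exp_clog2 _)) _.
by rewrite -!expnD leq_pexp2l // /qsize; lia.
Qed.

Lemma dvdn_prod_mem [I : eqType] [s : seq I] (F : I -> nat) [x] :
  x \in s -> (F x %| \prod_(y <- s) F y)%N.
Proof. by move=> xs; rewrite (big_rem x) //= dvdn_mulr. Qed.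

Lemma prod_leq_expn [I : eqType] [s : seq I] [F : I -> nat] [m] :
  (forall x, x \in s -> F x <= m)%N -> (\prod_(x <- s) F x <= m ^ size s)%N.
Proof.
elim: s => [|x s IHs] le_Fm; first by rewrite big_nil.
rewrite big_cons expnS leq_mul ?le_Fm ?mem_head // IHs // => y ys.
by rewrite le_Fm // inE ys orbT.
Qed.

(* The exponent in [1, p-1] congruent to e modulo p-1 (for e > 0). *)
Definition red_exp (p e : nat) := (e.-1 %% p.-1).+1.

Lemma red_exp_lt p e : (1 < p)%N -> (red_exp p e < p)%N.
Proof.
move=> p_gt1.
by rewrite /red_exp -[p in (_ < p)%N](ltn_predK p_gt1) ltnS ltn_pmod // -ltnS (ltn_predK p_gt1).
Qed.

Lemma dvdn_sub_red_exp p e : (p.-1 %| e - red_exp p e)%N.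
Proof.
have -> : (e - red_exp p e = e.-1 %/ p.-1 * p.-1)%N.
  rewrite /red_exp; move: p.-1 => m; have := divn_eq e.-1 m.
  by move: (_ %/ _)%N (_ %% _)%N => q r; lia.
exact: dvdn_mull.
Qed.

Lemma red_exp_eq_dvd p e e' : (0 < e' <= e)%N -> red_exp p e = red_exp p e' -> (p.-1 %| e - e')%N.
Proof.
move=> /andP [e'_gt0 le_e'e] /succn_inj eq_mod.
rewrite -eqn_mod_dvd // -(prednK (leq_trans e'_gt0 le_e'e)) -(prednK e'_gt0).
by rewrite -[e.-1.+1]addn1 -[e'.-1.+1]addn1 eqn_modDr eq_mod.
Qed.

Section Reduction.

Variables (p : nat) (p_pr : prime p).

Lemma Fp_intr_eq0 (z : int) : ((z%:~R : 'F_p) == 0) = (p %| `|z|)%N.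
Proof.
have chp := pchar_Fp p_pr.
by case: z => n; rewrite ?NegzE ?mulrNz ?oppr_eq0 ?abszN /= (dvdn_pcharf chp).
Qed.

Lemma p_integral_denq_neq0 [x] : p_integral p x -> ((denq x)%:~R : 'F_p) != 0.
Proof. by rewrite Fp_intr_eq0. Qed.

Lemma prime_ndvd_num_den x : ~~ ((p %| `|numq x|) && (p %| `|denq x|))%N.
Proof.
rewrite -dvdn_gcd; have /eqP -> := coprime_num_den x.
by rewrite dvdn1 neq_ltn prime_gt1 ?orbT.
Qed.

Definition reduces (x : rat) (y : 'F_p) := p_integral p x /\ rat_modp p x = y.

Lemma reduces_frac (u v : int) : ~~ (p %| `|v|)%N ->
  reduces (u%:~R / v%:~R) (u%:~R / v%:~R).
Proof.
move=> pv; set x := u%:~R / v%:~R.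
have v0 : v != 0 by apply: contraNneq pv => ->.
have cross : numq x * v = u * denq x.
  apply: (@intr_inj rat); rewrite !rmorphM /= numqE /x.
  by rewrite mulrAC divfK ?intr_eq0 // mulrC.
have pd : ~~ (p %| `|denq x|)%N.
  apply: contra pv => pd.
  have : (p %| `|numq x| * `|v|)%N by rewrite -abszM cross abszM dvdn_mull.
  rewrite Euclid_dvdM // => /orP [pn | //].
  by have := prime_ndvd_num_den x; rewrite pn pd.
split=> //; rewrite /rat_modp; apply/eqP.
by rewrite eqr_div ?Fp_intr_eq0 // -!intrM cross.
Qed.

Lemma reduces_int (z : int) : reduces z%:~R z%:~R.
Proof.
have p1 : ~~ (p %| `|1%:Z|)%N by rewrite dvdn1 neq_ltn prime_gt1 ?orbT.
by have := reduces_frac z 1 p1; rewrite !divr1.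
Qed.

Lemma reduces_rat_modp [x] : p_integral p x -> reduces x (rat_modp p x).
Proof. by []. Qed.

Lemma reducesD [x x' y y'] : reduces x x' -> reduces y y' -> reduces (x + y) (x' + y').
Proof.
move=> [ix <-] [iy <-].
have pd : ~~ (p %| `|(denq x * denq y)%R|)%N by rewrite abszM Euclid_dvdM // negb_or; apply/andP.
set N := (numq x * denq y + numq y * denq x)%R.
have -> : x + y = N%:~R / (denq x * denq y)%:~R.
  rewrite -{1}(divq_num_den x) -{1}(divq_num_den y) !rmorphD !rmorphM /=.
  by field; rewrite !intr_eq0 !denq_neq0.
suff -> : rat_modp p x + rat_modp p y = N%:~R / (denq x * denq y)%:~R by exact: reduces_frac.
rewrite /rat_modp !rmorphD !rmorphM /=.
by field; rewrite !p_integral_denq_neq0.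
Qed.

Lemma reducesM [x x' y y'] : reduces x x' -> reduces y y' -> reduces (x * y) (x' * y').
Proof.
move=> [ix <-] [iy <-].
have pd : ~~ (p %| `|(denq x * denq y)%R|)%N by rewrite abszM Euclid_dvdM // negb_or; apply/andP.
have -> : x * y = (numq x * numq y)%:~R / (denq x * denq y)%:~R.
  rewrite -{1}(divq_num_den x) -{1}(divq_num_den y) !rmorphM /=.
  by field; rewrite !intr_eq0 !denq_neq0.
suff -> : rat_modp p x * rat_modp p y = (numq x * numq y)%:~R / (denq x * denq y)%:~R.
  exact: reduces_frac.
rewrite /rat_modp !rmorphM /=.
by field; rewrite !p_integral_denq_neq0.
Qed.

Lemma reducesN [x x'] : reduces x x' -> reduces (- x) (- x').
Proof. by move=> r; rewrite -mulN1r -[- x']mulN1r; apply: reducesM (reduces_int (-1)) r. Qed.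

Lemma reduces_sum (I : Type) (r : seq I) (P : pred I) (F : I -> rat) (G : I -> 'F_p) :
  (forall i, P i -> reduces (F i) (G i)) ->
  reduces (\sum_(i <- r | P i) F i) (\sum_(i <- r | P i) G i).
Proof.
move=> FG; apply: (big_ind2 reduces) => //; last exact: reducesD.
exact: reduces_int 0.
Qed.

Lemma rat_modp_eq0 x : p_integral p x -> (rat_modp p x == 0) = (p %| `|numq x|)%N.
Proof.
move=> ix; rewrite /rat_modp mulf_eq0 invr_eq0 (negbTE (p_integral_denq_neq0 ix)).
by rewrite orbF Fp_intr_eq0.
Qed.

Lemma rat_modp0 : rat_modp p 0 = 0.
Proof. by rewrite /rat_modp mul0r. Qed.

Definition preduces (P : {poly rat}) (Q : {poly 'F_p}) := forall k, reduces P`_k Q`_k.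

Lemma preduces_map (P : {poly rat}) : (forall k, p_integral p P`_k) ->
  preduces P (map_poly (rat_modp p) P).
Proof. by move=> iP k; rewrite coef_map_id0 ?rat_modp0. Qed.

Lemma preduces_mapE [P : {poly rat}] [Q] : preduces P Q -> map_poly (rat_modp p) P = Q.
Proof. by move=> PQ; apply/polyP => k; rewrite coef_map_id0 ?rat_modp0 //; case: (PQ k). Qed.

Lemma preducesC x x' : reduces x x' -> preduces x%:P x'%:P.
Proof. by move=> xx' k; rewrite !coefC; case: (k == 0)%N => //; exact: reduces_int 0. Qed.

Lemma preducesX : preduces 'X 'X.
Proof.
by move=> k; rewrite !coefX; case: (k == 1)%N; [exact: reduces_int 1 | exact: reduces_int 0].
Qed.

Lemma preducesD (P : {poly rat}) P' Q Q' :
  preduces P P' -> preduces Q Q' -> preduces (P + Q) (P' + Q').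
Proof. by move=> PP' QQ' k; rewrite !coefD; apply: reducesD. Qed.

Lemma preducesM (P : {poly rat}) P' Q Q' :
  preduces P P' -> preduces Q Q' -> preduces (P * Q) (P' * Q').
Proof. by move=> PP' QQ' k; rewrite !coefM; apply: reduces_sum => i _; apply: reducesM. Qed.

Lemma preducesB (P : {poly rat}) P' Q Q' :
  preduces P P' -> preduces Q Q' -> preduces (P - Q) (P' - Q').
Proof. by move=> PP' QQ' k; rewrite !coefB; apply: reducesD (PP' k) (reducesN (QQ' k)). Qed.

Lemma preducesZ x x' (P : {poly rat}) P' :
  reduces x x' -> preduces P P' -> preduces (x *: P) (x' *: P').
Proof. by move=> xx' PP'; rewrite -!mul_polyC; apply: preducesM => //; apply: preducesC. Qed.

Lemma preducesXn (P : {poly rat}) P' n : preduces P P' -> preduces (P ^+ n) (P' ^+ n).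
Proof.
move=> PP'; elim: n => [|n IHn]; last by rewrite !exprS; apply: preducesM.
by rewrite !expr0 -!polyC1; apply: preducesC; exact: reduces_int 1.
Qed.

Lemma preduces_sum (I : Type) (r : seq I) (Pr : pred I) (F : I -> {poly rat}) G :
  (forall i, Pr i -> preduces (F i) (G i)) ->
  preduces (\sum_(i <- r | Pr i) F i) (\sum_(i <- r | Pr i) G i).
Proof.
move=> FG; apply: (big_ind2 preduces) => //; last exact: preducesD.
by rewrite -!polyC0; apply: preducesC; exact: reduces_int 0.
Qed.

Lemma p_integral_comp (P Q : {poly rat}) Q' : (forall k, p_integral p P`_k) -> preduces Q Q' ->
  forall k, p_integral p (P \Po Q)`_k.
Proof.
move=> iP QQ' k; rewrite comp_polyE.
suff PoQ : preduces (\sum_(i < size P) P`_i *: Q ^+ i)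
                    (\sum_(i < size P) rat_modp p P`_i *: Q' ^+ i) by case: (PoQ k).
by apply: preduces_sum => i _; apply: preducesZ; [split | apply: preducesXn].
Qed.

Lemma p_integral_root (P : {poly rat}) x : (forall k, p_integral p P`_k) ->
  rat_modp p (lead_coef P) != 0 -> root P x -> p_integral p x.
Proof.
move=> iP lcP /rootP Px; apply: contraT; rewrite negbK => pb.
set n := (size P).-1; set a := numq x; set b := denq x.
have P0 : P != 0 by apply: contraNneq lcP => ->; rewrite lead_coef0 rat_modp0.
have szP : size P = n.+1 by rewrite prednK // size_poly_gt0.
(* Clearing the denominator of x = a / b: since p divides b, modulo p only the
   leading term of sum_i P_i a^i b^(n-i) = P(x) b^n survives. *)
pose F i := P`_i * (a ^+ i * b ^+ (n - i))%:~R.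
have hom : \sum_(i < n.+1) F i = P.[x] * (b ^+ n)%:~R.
  rewrite horner_coef szP mulr_suml; apply: eq_bigr => i _.
  rewrite /F -mulrA; congr (_ * _).
  by rewrite rmorphM !rmorphXn /= numqE exprMn -mulrA -exprD subnKC // -ltnS.
have : \sum_(i < n.+1) rat_modp p P`_i * (a ^+ i * b ^+ (n - i))%:~R = 0 :> 'F_p.
  have [_ <-] := reduces_sum _ (index_enum 'I_n.+1) xpredT (fun i : 'I_n.+1 => F i)
    (fun i : 'I_n.+1 => rat_modp p P`_i * (a ^+ i * b ^+ (n - i))%:~R)
    (fun i _ => reducesM (reduces_rat_modp (iP i)) (reduces_int _)).
  by rewrite hom Px mul0r rat_modp0.
have b0 : (b%:~R : 'F_p) = 0 by apply/eqP; rewrite Fp_intr_eq0.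
rewrite big_ord_recr big1 => [|i _]; last first.
  by rewrite rmorphM !rmorphXn /= b0 expr0n subn_eq0 leqNgt ltn_ord !mulr0.
rewrite /= add0r subnn expr0 mulr1 rmorphXn /= => /eqP.
rewrite mulf_eq0 [P`_n]lead_coefE (negbTE lcP) expf_eq0 Fp_intr_eq0 => /andP [_ pa].
by have := prime_ndvd_num_den x; rewrite pa pb.
Qed.

Lemma XsubC_expp_modp (a : 'F_p) : ('X - a%:P) ^+ p %% ('X^p - 'X) = 'X - a%:P.
Proof.
have chp : p \in [pchar {poly 'F_p}] by rewrite pchar_poly pchar_Fp.
have -> : ('X - a%:P) ^+ p = ('X - a%:P) + ('X^p - 'X).
  rewrite -(pFrobenius_autE chp) pFrobenius_autB_comm; last exact: mulrC.
  by rewrite !pFrobenius_autE -polyC_exp -{2}(expf_card a) card_Fp //; ring.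
by rewrite modpD modpp addr0 modp_small // size_XsubC size_XnsubX ?ltnS ?prime_gt1.
Qed.

Lemma XsubC_exp_modp (a : 'F_p) e : (0 < e)%N ->
  ('X - a%:P) ^+ e %% ('X^p - 'X) = ('X - a%:P) ^+ red_exp p e.
Proof.
move=> e_gt0; set M := 'X^p - 'X.
have periodic q m : (0 < m)%N ->
    ('X - a%:P) ^+ (m + q * p.-1) %% M = ('X - a%:P) ^+ m %% M.
  move=> m_gt0; elim: q => [|q IHq]; first by rewrite addn0.
  have -> : (m + q.+1 * p.-1 = (m + q * p.-1).-1 + p)%N.
    by rewrite mulSn; have := prime_gt0 p_pr; move: (q * p.-1)%N => k; lia.
  by rewrite exprD -modp_mul XsubC_expp_modp -exprSr prednK ?IHq // addn_gt0 m_gt0.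
have e_eq : e = (red_exp p e + e.-1 %/ p.-1 * p.-1)%N.
  rewrite /red_exp; move: p.-1 => m; have := divn_eq e.-1 m.
  by move: (_ %/ _)%N (_ %% _)%N => q r; lia.
rewrite {1}e_eq periodic // modp_small // size_exp_XsubC size_XnsubX ?prime_gt1 // ltnS.
exact/red_exp_lt/prime_gt1.
Qed.

End Reduction.

Definition sparse_poly {R : nzRingType} (t : nat) (a : nat -> R) (E : nat -> nat) : {poly R} :=
  (a 0%N)%:P + \sum_(1 <= i < t.+1) a i *: 'X^(E i).

Section SparsePoly.

Variables (R : nzRingType) (t : nat) (a : nat -> R) (E : nat -> nat).

Lemma comp_sparse_poly q :
  sparse_poly t a E \Po q = (a 0%N)%:P + \sum_(1 <= i < t.+1) a i *: q ^+ E i.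
Proof.
rewrite /sparse_poly comp_polyD comp_polyC linear_sum /=.
by congr (_ + _); apply: eq_bigr => i _; rewrite comp_polyZ comp_Xn_poly.
Qed.

Lemma coef_sparse_poly j : (1 <= j <= t)%N -> (0 < E j)%N ->
    (forall i, (1 <= i <= t)%N -> i != j -> E i != E j) ->
  (sparse_poly t a E)`_(E j) = a j.
Proof.
move=> jt Ej_gt0 Ej_uniq.
rewrite coefD coefC (gtn_eqF Ej_gt0) add0r coef_sum.
rewrite (bigD1_seq j) ?mem_index_iota ?ltnS ?iota_uniq //= coefZ coefXn eqxx mulr1.
rewrite big1_seq ?addr0 // => i /andP [ij]; rewrite mem_index_iota ltnS => it.
by rewrite coefZ coefXn eq_sym (negbTE (Ej_uniq i it ij)) mulr0.
Qed.

Lemma coef_sparse_poly_gt k : (0 < k)%N -> (forall i, (1 <= i <= t)%N -> (E i < k)%N) ->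
  (sparse_poly t a E)`_k = 0.
Proof.
move=> k_gt0 E_lt; rewrite coefD coefC (gtn_eqF k_gt0) add0r coef_sum.
rewrite big1_seq // => i; rewrite mem_index_iota ltnS => it.
by rewrite coefZ coefXn (gtn_eqF (E_lt i it)) mulr0.
Qed.

Lemma size_sparse_poly_gt j : (1 <= j <= t)%N -> (0 < E j)%N ->
    (forall i, (1 <= i <= t)%N -> i != j -> E i != E j) -> a j != 0 ->
  (E j < size (sparse_poly t a E))%N.
Proof.
move=> jt Ej_gt0 Ej_uniq aj_neq0; rewrite ltnNge; apply: contra aj_neq0 => /leq_sizeP.
by move/(_ _ (leqnn _)); rewrite coef_sparse_poly // => ->.
Qed.

Lemma size_sparse_poly : (0 < t)%N -> (0 < E t)%N ->
    (forall i, (1 <= i < t)%N -> (E i < E t)%N) -> a t != 0 ->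
  size (sparse_poly t a E) = (E t).+1.
Proof.
move=> t_gt0 Et_gt0 E_lt at_neq0; apply/anti_leq/andP; split; last first.
  apply: size_sparse_poly_gt => //; first by rewrite t_gt0 leqnn.
  move=> i /andP [i_gt0 le_it] ne_it.
  by rewrite ltn_eqF // E_lt // i_gt0 ltn_neqAle ne_it le_it.
apply/leq_sizeP => k lt_Et_k; apply: coef_sparse_poly_gt; first exact: leq_ltn_trans lt_Et_k.
move=> i /andP [i_gt0]; rewrite leq_eqVlt => /orP [/eqP -> // | lt_it].
by apply: ltn_trans lt_Et_k; apply: E_lt; rewrite i_gt0.
Qed.

End SparsePoly.

Lemma shifted_sparseE alpha t c e :
  shifted_sparse alpha t c e = sparse_poly t c e \Po ('X - alpha%:P).
Proof. by rewrite comp_sparse_poly. Qed.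

Section ShiftedSparse.

Variables (alpha : rat) (t : nat) (c : nat -> rat) (e : nat -> nat).
Hypotheses (c_neq0 : forall i, (1 <= i <= t)%N -> c i != 0) (e1_gt0 : (0 < e 1)%N)
  (e_incr : forall i, (1 <= i < t)%N -> (e i < e i.+1)%N) (t_gt0 : (0 < t)%N).

Local Notation f := (shifted_sparse alpha t c e).

Lemma e_ltn : {in [pred i | 1 <= i <= t]%N &, {homo e : i j / (i < j)%N}}.
Proof.
apply: homo_ltn_in; first exact: ltn_trans.
  move=> i j; rewrite !inE => /andP [i_gt0 _] /andP [_ jt] k /andP [lt_ik lt_kj].
  by rewrite inE (leq_trans i_gt0 (ltnW lt_ik)) (leq_trans (ltnW lt_kj) jt).
by move=> i; rewrite !inE => /andP [i_gt0 _] /andP [_ it]; apply: e_incr; rewrite i_gt0.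
Qed.

Lemma e_gt0 i : (1 <= i <= t)%N -> (0 < e i)%N.
Proof.
move=> /andP [i_gt0 it]; have [-> // | ne_i1] := eqVneq i 1%N.
apply: ltn_trans e1_gt0 _; apply: e_ltn; rewrite ?inE ?i_gt0 ?it ?(leq_trans i_gt0 it) //.
by rewrite ltn_neqAle eq_sym ne_i1.
Qed.

Lemma e_neq i j : (1 <= i <= t)%N -> (1 <= j <= t)%N -> i != j -> e i != e j.
Proof.
move=> it jt; case: (ltngtP i j) => [lt_ij | lt_ji | ->] // _.
  by rewrite ltn_eqF // e_ltn.
by rewrite gtn_eqF // e_ltn.
Qed.

Lemma e_lt_last i : (1 <= i < t)%N -> (e i < e t)%N.
Proof.
by move=> /andP [i_gt0 lt_it]; apply: e_ltn; rewrite // inE ?i_gt0 ?t_gt0 ?(ltnW lt_it) ?leqnn.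
Qed.

Lemma size_shifted_sparse : size f = (e t).+1.
Proof.
rewrite shifted_sparseE size_comp_poly2 ?size_XsubC // size_sparse_poly //.
- by apply: e_gt0; rewrite t_gt0 leqnn.
- exact: e_lt_last.
- by apply: c_neq0; rewrite t_gt0 leqnn.
Qed.

Lemma lead_coef_shifted_sparse : lead_coef f = c t.
Proof.
have tt : (1 <= t <= t)%N by rewrite t_gt0 leqnn.
have := size_shifted_sparse; rewrite shifted_sparseE lead_coef_comp ?size_XsubC //.
rewrite size_comp_poly2 ?size_XsubC // lead_coefXsubC expr1n mulr1 lead_coefE => -> /=.
by apply: coef_sparse_poly; rewrite ?e_gt0 // => i it; apply: e_neq.
Qed.

Lemma horner_shifted_sparse : f.[alpha] = c 0%N.
Proof.
rewrite hornerD hornerC horner_sum big1_seq ?addr0 // => i; rewrite mem_index_iota ltnS.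
by move=> /e_gt0 ei_gt0; rewrite !hornerE subrr expr0n gtn_eqF ?mulr0.
Qed.

Section ModPrime.

Variables (p : nat) (p_pr : prime p).
Hypotheses (f_int : forall k, p_integral p f`_k) (c0_int : p_integral p (c 0%N))
  (ct_int : p_integral p (c t)) (ct_num : ~~ (p %| `|numq (c t)|)%N).

Lemma p_integral_shift : p_integral p alpha.
Proof.
have f_red : preduces p (f - (c 0%N)%:P) (map_poly (rat_modp p) f - (rat_modp p (c 0%N))%:P).
  by apply: preducesB => //; [exact: preduces_map | apply/preducesC/reduces_rat_modp].
apply: (p_integral_root _ p_pr (f - (c 0%N)%:P)) => [k | |].
- by case: (f_red k).
- rewrite lead_coefDl ?lead_coef_shifted_sparse ?rat_modp_eq0 //.
  rewrite size_opp size_shifted_sparse ltnS (leq_trans (size_polyC_leq1 _)) //.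
  by apply: e_gt0; rewrite t_gt0 leqnn.
- by rewrite /root hornerD hornerN hornerC horner_shifted_sparse subrr.
Qed.

Lemma p_integral_coef i : (i <= t)%N -> p_integral p (c i).
Proof.
case: i => [// | i it].
have Xadd_red : preduces p ('X + alpha%:P) ('X + (rat_modp p alpha)%:P).
  apply: preducesD => //; first exact: preducesX.
  exact/preducesC/reduces_rat_modp/p_integral_shift.
have -> : c i.+1 = (f \Po ('X + alpha%:P))`_(e i.+1).
  rewrite shifted_sparseE -comp_polyA comp_polyB comp_polyX comp_polyC addrK comp_polyXr.
  by rewrite coef_sparse_poly ?e_gt0 // => j jt; apply: e_neq.
exact: p_integral_comp Xadd_red _.
Qed.

Lemma red_p_shifted_sparse :
  red_p p f = sparse_poly t (rat_modp p \o c) (red_exp p \o e) \Po ('X - (rat_modp p alpha)%:P).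
Proof.
set Y := 'X - (rat_modp p alpha)%:P.
have f_red : preduces p f
    ((rat_modp p (c 0%N))%:P + \sum_(1 <= i < t.+1) rat_modp p (c i) *: Y ^+ e i).
  have Y_red : preduces p ('X - alpha%:P) Y.
    apply: preducesB => //; first exact: preducesX.
    exact/preducesC/reduces_rat_modp/p_integral_shift.
  apply: preducesD => //; first by apply/preducesC/reduces_rat_modp.
  rewrite !big_seq; apply: preduces_sum => // i; rewrite mem_index_iota ltnS => /andP [_ it].
  by apply: preducesZ => //; [apply/reduces_rat_modp/p_integral_coef | apply: preducesXn].
rewrite /red_p (preduces_mapE _ f_red) comp_sparse_poly modpD modp_sum modp_small; last first.
  by rewrite size_XnsubX ?prime_gt1 // ltnS (leq_trans (size_polyC_leq1 _)) ?prime_gt0.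
congr (_ + _); rewrite !big_seq; apply: eq_bigr => i; rewrite mem_index_iota ltnS => it.
by rewrite modpZl XsubC_exp_modp ?e_gt0.
Qed.

Lemma size_red_p_shifted_sparse_gt m :
    (forall i, (1 <= i < t)%N -> ~~ (p.-1 %| e t - e i)%N) ->
    (forall k, (1 <= k <= m)%N -> ~~ (p.-1 %| e t - k)%N) ->
  (m < (size (red_p p f)).-1)%N.
Proof.
move=> et_ei et_k; have tt : (1 <= t <= t)%N by rewrite t_gt0 leqnn.
have m_lt : (m < red_exp p (e t))%N.
  by rewrite ltnNge; apply/negP => le_m; apply/negP: (dvdn_sub_red_exp p (e t)); apply: et_k.
rewrite red_p_shifted_sparse size_comp_poly2 ?size_XsubC // ltn_predRL.
apply: leq_ltn_trans m_lt _; apply: (@size_sparse_poly_gt _ t _ (red_exp p \o e) t tt) => //=.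
  move=> i /andP [i_gt0 le_it] ne_it; have lt_it : (i < t)%N by rewrite ltn_neqAle ne_it.
  apply: contra (et_ei i _) => [/eqP red_eq | ]; last by rewrite i_gt0.
  by apply: red_exp_eq_dvd (esym red_eq); rewrite e_gt0 ?i_gt0 // ltnW // e_lt_last ?i_gt0.
by rewrite rat_modp_eq0.
Qed.

End ModPrime.

End ShiftedSparse.

Lemma shifted_sparse0 alpha c e : shifted_sparse alpha 0 c e = (c 0%N)%:P.
Proof. by rewrite /shifted_sparse big_geq ?addr0. Qed.

Theorem mainTheorem2 (alpha : rat) (t : nat) (c : nat -> rat) (e : nat -> nat)
  (BT BH BN : nat) :
  (forall i, (1 <= i <= t)%N -> c i != 0) ->
  (0 < e 1%N)%N ->
  (forall i, (1 <= i < t)%N -> (e i < e i.+1)%N) ->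
  (t <= BT)%N ->
  (forall i, (i <= t)%N -> (qsize (c i) <= BH)%N) ->
  ((size (shifted_sparse alpha t c e)).-1 <= 2 ^ BN)%N ->
  (2 * BT < (size (shifted_sparse alpha t c e)).-1)%N ->
  exists C1 C2 : nat,
    [/\ (0 < C1)%N, (C1 <= 2 ^ (2 * BH))%N, (0 < C2)%N,
        (C2 <= 2 ^ (BN * (3 * BT - 1)))%N &
        forall p : nat, prime p -> ~~ (p %| C1)%N -> ~~ ((p.-1) %| C2)%N ->
          (forall k, p_integral p (shifted_sparse alpha t c e)`_k) ->
          (2 * BT < (size (red_p p (shifted_sparse alpha t c e))).-1)%N].
Proof.
move=> c_neq0 e1_gt0 e_incr t_le sz_c deg_le deg_gt.
have t_gt0 : (0 < t)%N.
  move: deg_gt; case: t {c_neq0 e_incr t_le sz_c deg_le} => // .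
  by rewrite shifted_sparse0 size_polyC; case: (_ != 0).
rewrite size_shifted_sparse //= in deg_le deg_gt.
pose K := [seq e i | i <- index_iota 1 t] ++ index_iota 1 (2 * BT).+1.
have K_lt x : x \in K -> (x < e t)%N.
  rewrite mem_cat mem_index_iota ltnS => /orP [/mapP [i] | /andP [_ le_x]].
    by rewrite mem_index_iota => it ->; apply: e_lt_last.
  exact: leq_ltn_trans le_x deg_gt.
exists (`|numq (c t)| * `|denq (c t)| * `|denq (c 0%N)|)%N, (\prod_(x <- K) (e t - x))%N; split.
- by rewrite !muln_gt0 !absz_gt0 numq_eq0 c_neq0 ?t_gt0 ?leqnn ?denq_neq0.
- apply: leq_trans (leq_numq_denq_qsize _ _) _; rewrite leq_pexp2l //.
  by have := sz_c t (leqnn t); have := sz_c 0%N (leq0n t); lia.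
- by rewrite big_seq prodn_cond_gt0 // => x /K_lt; rewrite subn_gt0.
- have le_Fm x : x \in K -> (e t - x <= 2 ^ BN)%N.
    by move=> _; exact: leq_trans (leq_subr _ _) deg_le.
  apply: leq_trans (prod_leq_expn le_Fm) _.
  by rewrite -expnM leq_pexp2l // leq_mul2l size_cat size_map !size_iota; lia.
move=> p p_pr pC1 pC2 f_int; move: pC1; rewrite !Euclid_dvdM // !negb_or.
case/andP=> /andP [ct_num ct_int] c0_int.
apply: size_red_p_shifted_sparse_gt => // [i it | k km]; apply: contra pC2 => /dvdn_trans.
  by apply; apply: (dvdn_prod_mem (fun x => e t - x)%N); rewrite mem_cat map_f ?mem_index_iota.
by apply; apply: (dvdn_prod_mem (fun x => e t - x)%N); rewrite mem_cat mem_index_iota ltnS km orbT.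
Qed.
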